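(* Let $1<p<\infty$ with $p\neq2$. For each $r\ge1$ let $T_r$ be the diagonal operator on $l^2([1,r])$ with diagonal entries $\frac1r,\frac2r,\ldots,\frac rr$. Let $\mathcal{Y}=\big(\bigoplus_{r\ge1}l^2([1,r])\big)_{l^p}$ and $T=\bigoplus_{r\ge1}T_r\in B(\mathcal{Y})$. Let $D$ be a (bounded) diagonal operator on $l^p$. Then there is no operator $L:\mathcal{Y}\to l^p$ such that $\inf\{\|Lx\|:\|x\|=1\}>0$ and $DL-LT$ is compact.
   Context: $l^2([1,r])$ is the $r$-dimensional Hilbert space $\ell^2(\{1,\ldots,r\})$; $(\bigoplus\cdot)_{l^p}$ denotes the $l^p$-direct sum. A diagonal operator on $l^p$ is $(x_1,x_2,\ldots)\mapsto(w_1x_1,w_2x_2,\ldots)$ with bounded scalars $w_i$. *)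

From Stdlib Require Import Reals ClassicalEpsilon.
Open Scope R_scope.

Definition Cx : Type := (R * R)%type.
Definition Cadd (z w : Cx) : Cx := (fst z + fst w, snd z + snd w).
Definition Csub (z w : Cx) : Cx := (fst z - fst w, snd z - snd w).
Definition Cmul (z w : Cx) : Cx :=
  (fst z * fst w - snd z * snd w, fst z * snd w + snd z * fst w).
Definition RtoC (a : R) : Cx := (a, 0).
Definition Cmod (z : Cx) : R := sqrt (fst z ^ 2 + snd z ^ 2).

(* ---------- real powers of nonnegative reals (0 ^ q = 0 for q > 0) ---------- *)
Definition rpow (a q : R) : R := if Rlt_dec 0 a then Rpower a q else 0.

Definition summable (a : nat -> R) : Prop := exists l, infinite_sum a l.
Definition series (a : nat -> R) : R :=
  epsilon (inhabits 0) (fun l => infinite_sum a l).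

Definition in_lp (p : R) (x : nat -> Cx) : Prop :=
  summable (fun n => rpow (Cmod (x n)) p).
Definition lp_norm (p : R) (x : nat -> Cx) : R :=
  rpow (series (fun n => rpow (Cmod (x n)) p)) (1 / p).

(* ---------- Y = (⊕_{r>=1} l^2([1,r]))_{l^p} ----------
   An element is y : nat -> nat -> Cx; block k (k = r-1) is the vector
   (y k 0, ..., y k k) in l^2([1,k+1]); entries y k i with i > k must vanish. *)
Definition block_norm (k : nat) (v : nat -> Cx) : R :=
  sqrt (sum_f_R0 (fun i => Cmod (v i) ^ 2) k).
Definition in_Y (p : R) (y : nat -> nat -> Cx) : Prop :=
  (forall k i : nat, (k < i)%nat -> y k i = (0, 0)) /\
  summable (fun k => rpow (block_norm k (y k)) p).
Definition Y_norm (p : R) (y : nat -> nat -> Cx) : R :=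
  rpow (series (fun k => rpow (block_norm k (y k)) p)) (1 / p).

Definition Y_lin (a : Cx) (y : nat -> nat -> Cx) (b : Cx) (z : nat -> nat -> Cx) :
  nat -> nat -> Cx := fun k i => Cadd (Cmul a (y k i)) (Cmul b (z k i)).

(* T = ⊕ T_r, T_r = diag(1/r, 2/r, ..., r/r); block k has r = k+1,
   entry i (0-based) is multiplied by (i+1)/(k+1). *)
Definition Top (y : nat -> nat -> Cx) : nat -> nat -> Cx :=
  fun k i => Cmul (RtoC (INR (S i) / INR (S k))) (y k i).

Definition bounded_weights (w : nat -> Cx) : Prop :=
  exists B : R, forall n, Cmod (w n) <= B.
Definition Dop (w : nat -> Cx) (x : nat -> Cx) : nat -> Cx :=
  fun n => Cmul (w n) (x n).

(* L : Y -> l^p is a bounded linear operator (only its values on Y matter) *)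
Definition bounded_linear_Y_lp (p : R)
    (L : (nat -> nat -> Cx) -> (nat -> Cx)) : Prop :=
  (forall y, in_Y p y -> in_lp p (L y)) /\
  (forall a b y z, in_Y p y -> in_Y p z -> forall n,
      L (Y_lin a y b z) n = Cadd (Cmul a (L y n)) (Cmul b (L z n))) /\
  (exists M : R, forall y, in_Y p y -> lp_norm p (L y) <= M * Y_norm p y).

Definition compact_Y_lp (p : R) (K : (nat -> nat -> Cx) -> (nat -> Cx)) : Prop :=
  forall ys : nat -> (nat -> nat -> Cx),
    (forall m, in_Y p (ys m) /\ Y_norm p (ys m) <= 1) ->
    exists (phi : nat -> nat) (z : nat -> Cx),
      (forall m, (phi m < phi (S m))%nat) /\ in_lp p z /\
      Un_cv (fun m => lp_norm p (fun n => Csub (K (ys (phi m)) n) (z n))) 0.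

(* For a block [r = km] of [T], the unit vectors [e_(am+1)], [a < k], are
   eigenvectors with eigenvalues [(am+1)/(km)], which are [1/k] apart.  Since
   [K = DL - LT] is compact and unit vectors taken from ever later blocks form a
   weakly null sequence, [|K e| -> 0] along them; so for [m] large, [K e_(am+1)] is
   tiny for every [a < k].  At a coordinate [n] of [l^p],
   [(w_n - (am+1)/(km)) (L e_(am+1))_n = (K e_(am+1))_n], so [(L e_(am+1))_n] can be
   non-negligible for at most one [a]: the vectors [L e_(am+1)] are almost
   disjointly supported.  Hence for the unit vector [x = k^(-1/2) sum_a e_(am+1)] of
   [Y], [|L x|^p] is comparable to [k^(-p/2) sum_a |L e_(am+1)|^p], i.e. to
   [k^(1-p/2)].  As [c <= |L x| <= |L|], [k^(1-p/2)] would stay bounded away from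
   [0] and [oo] for all [k], which fails unless [p = 2]. *)

From Stdlib Require Import Reals Lra Lia Psatz ClassicalEpsilon FunctionalExtensionality.
From Coquelicot Require Import Coquelicot.
Open Scope R_scope.

(** * Real powers *)

Lemma rpow_ge0 a q : 0 <= rpow a q.
Proof. unfold rpow; destruct (Rlt_dec 0 a); [left; apply exp_pos | lra]. Qed.

Lemma rpow_0_l q : rpow 0 q = 0.
Proof. unfold rpow; destruct (Rlt_dec 0 0); lra. Qed.

Lemma rpow_Rpower a q : 0 < a -> rpow a q = Rpower a q.
Proof. intros; unfold rpow; destruct (Rlt_dec 0 a); lra. Qed.

Lemma rpow_gt0 a q : 0 < a -> 0 < rpow a q.
Proof. intros; rewrite rpow_Rpower by auto; apply exp_pos. Qed.

Lemma rpow_le_compat a b q : 0 <= q -> 0 <= a <= b -> rpow a q <= rpow b q.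
Proof.
  intros Hq [[Ha | <-] Hab].
  - rewrite !rpow_Rpower by lra. apply Rle_Rpower_l; lra.
  - rewrite rpow_0_l; apply rpow_ge0.
Qed.

Lemma rpow_lt_compat a b q : 0 < q -> 0 <= a < b -> rpow a q < rpow b q.
Proof.
  intros Hq [[Ha | <-] Hab].
  - rewrite !rpow_Rpower by lra. apply Rlt_Rpower_l; lra.
  - rewrite rpow_0_l; apply rpow_gt0; lra.
Qed.

Lemma rpow_mult_distr a b q : 0 <= a -> 0 <= b -> rpow (a * b) q = rpow a q * rpow b q.
Proof.
  intros [Ha | <-] [Hb | <-].
  - rewrite !rpow_Rpower by nra. symmetry; apply Rpower_mult_distr; auto.
  - rewrite Rmult_0_r, !rpow_0_l; ring.
  - rewrite Rmult_0_l, !rpow_0_l; ring.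
  - rewrite Rmult_0_l, !rpow_0_l; ring.
Qed.

Lemma rpow_rpow a q s : 0 <= a -> rpow (rpow a q) s = rpow a (q * s).
Proof.
  intros [Ha | <-].
  - rewrite (rpow_Rpower a q), !rpow_Rpower by (auto; apply exp_pos). apply Rpower_mult.
  - rewrite !rpow_0_l; auto.
Qed.

Lemma rpow_1_r a : 0 <= a -> rpow a 1 = a.
Proof. intros [Ha | <-]; [rewrite rpow_Rpower by auto; apply Rpower_1; auto | apply rpow_0_l]. Qed.

Lemma rpow_1_l q : rpow 1 q = 1.
Proof. rewrite rpow_Rpower by lra. unfold Rpower. rewrite ln_1, Rmult_0_r. apply exp_0. Qed.

Lemma rpow_rpow_inv a q : 0 < q -> 0 <= a -> rpow (rpow a q) (1 / q) = a.
Proof. intros. rewrite rpow_rpow by auto. replace (q * (1 / q)) with 1 by (field; lra). apply rpow_1_r; auto. Qed.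

Lemma rpow_inv_rpow a q : 0 < q -> 0 <= a -> rpow (rpow a (1 / q)) q = a.
Proof. intros. rewrite rpow_rpow by auto. replace (1 / q * q) with 1 by (field; lra). apply rpow_1_r; auto. Qed.

Lemma rpow_plus_r a q r : 0 < a -> rpow a (q + r) = rpow a q * rpow a r.
Proof. intros. rewrite !rpow_Rpower by auto. apply Rpower_plus. Qed.

Lemma one_le_rpow2 q : 0 <= q -> 1 <= rpow 2 q.
Proof. intros. rewrite <- (rpow_1_l q). apply rpow_le_compat; lra. Qed.

Lemma rpow_plus_le a b q : 0 < q -> 0 <= a -> 0 <= b ->
  rpow (a + b) q <= rpow 2 q * (rpow a q + rpow b q).
Proof.
  intros Hq Ha Hb.
  assert (Hmax : a + b <= 2 * Rmax a b /\ 0 <= Rmax a b).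
  { unfold Rmax; destruct (Rle_dec a b); lra. }
  apply Rle_trans with (rpow (2 * Rmax a b) q); [apply rpow_le_compat; lra |].
  rewrite rpow_mult_distr by lra. apply Rmult_le_compat_l; [apply rpow_ge0 |].
  pose proof (rpow_ge0 a q); pose proof (rpow_ge0 b q).
  unfold Rmax; destruct (Rle_dec a b); lra.
Qed.

Lemma rpow_INR_unbounded s X : 0 < s -> exists N : nat, (1 <= N)%nat /\ X < rpow (INR N) s.
Proof.
  intros Hs. set (Y := Rabs X + 1).
  assert (HY : 0 < Y) by (unfold Y; pose proof (Rabs_pos X); lra).
  destruct (INR_archimed 1 (rpow Y (1 / s) + 1)) as [N HN]; [lra |].
  rewrite Rmult_1_r in HN.
  pose proof (rpow_ge0 Y (1 / s)).
  exists N. split; [destruct N; [simpl in HN; lra | lia] |].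
  apply Rlt_le_trans with Y; [unfold Y; pose proof (Rle_abs X); lra |].
  rewrite <- (rpow_inv_rpow Y s) by lra. apply rpow_le_compat; lra.
Qed.

Lemma rpow_sublinear q C d : 0 < q < 1 -> 0 < d ->
  exists N : nat, (1 <= N)%nat /\ C * rpow (INR N) q < d * INR N.
Proof.
  intros Hq Hd. destruct (rpow_INR_unbounded (1 - q) (Rabs C / d)) as [N [HN1 HN2]]; [lra |].
  exists N; split; auto.
  assert (HNp : 0 < INR N) by (apply lt_0_INR; lia).
  pose proof (rpow_gt0 (INR N) q HNp).
  replace (INR N) with (rpow (INR N) q * rpow (INR N) (1 - q)) at 2
    by (rewrite <- rpow_plus_r, Rplus_minus, rpow_1_r; lra).
  apply Rle_lt_trans with (Rabs C * rpow (INR N) q); [apply Rmult_le_compat_r; [lra | apply Rle_abs] |].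
  assert (Rabs C < d * rpow (INR N) (1 - q)).
  { replace (Rabs C) with (d * (Rabs C / d)) by (field; lra). apply Rmult_lt_compat_l; lra. }
  nra.
Qed.

Lemma rpow_inv_sqrt_mul x p : 0 < x -> rpow (/ sqrt x) p * x = rpow x (1 - p / 2).
Proof.
  intros Hx. assert (Hsq : 0 < sqrt x) by (apply sqrt_lt_R0; auto).
  assert (E1 : rpow (/ sqrt x) p * rpow (sqrt x) p = 1).
  { rewrite <- rpow_mult_distr, Rinv_l by (lra || (left; apply Rinv_0_lt_compat; auto)).
    apply rpow_1_l. }
  assert (E2 : rpow (sqrt x) p = rpow x (p / 2)).
  { rewrite <- Rpower_sqrt, <- (rpow_Rpower x (/ 2)), rpow_rpow by lra.
    f_equal. field. }
  assert (E3 : x = rpow x (p / 2) * rpow x (1 - p / 2)).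
  { rewrite <- rpow_plus_r by auto. replace (p / 2 + (1 - p / 2)) with 1 by ring.
    rewrite rpow_1_r; lra. }
  transitivity (rpow (/ sqrt x) p * rpow (sqrt x) p * rpow x (1 - p / 2)).
  - rewrite E2, Rmult_assoc, <- E3. reflexivity.
  - rewrite E1. ring.
Qed.

Lemma rpow_INR_bounded_exponent q :
  (exists lo hi, 0 < lo /\ forall k, (1 <= k)%nat -> lo <= rpow (INR k) q <= hi) -> q = 0.
Proof.
  intros [lo [hi [Hlo Hb]]].
  destruct (Rtotal_order q 0) as [Hq | [Hq | Hq]]; auto; exfalso.
  - destruct (rpow_INR_unbounded (- q) (/ lo)) as [k [Hk1 Hk2]]; [lra |].
    assert (Hk : 0 < INR k) by (apply lt_0_INR; lia).
    assert (E : rpow (INR k) q * rpow (INR k) (- q) = 1).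
    { rewrite <- rpow_plus_r, Rplus_opp_r by auto. rewrite rpow_Rpower by auto. apply Rpower_O; auto. }
    pose proof (Hb k Hk1). pose proof (rpow_gt0 (INR k) (- q) Hk).
    assert (lo * rpow (INR k) (- q) <= 1) by (rewrite <- E; apply Rmult_le_compat_r; lra).
    assert (lo * / lo = 1) by (field; lra). nra.
  - destruct (rpow_INR_unbounded q hi) as [k [Hk1 Hk2]]; auto.
    pose proof (Hb k Hk1). lra.
Qed.

(** * Series and finite sums *)

Lemma ex_series_Rplus a b : ex_series a -> ex_series b -> ex_series (fun n => a n + b n).
Proof. apply (ex_series_plus a b). Qed.

Lemma ex_series_Rscal c a : ex_series a -> ex_series (fun n => c * a n).
Proof. apply (ex_series_scal c a). Qed.

Lemma ex_series_le_nonneg a b : (forall n, 0 <= a n <= b n) -> ex_series b -> ex_series a.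
Proof.
  intros H. apply (ex_series_le a b). intros n.
  change (norm (a n)) with (Rabs (a n)). rewrite Rabs_pos_eq; apply H.
Qed.

Lemma Series_le_ex a b : (forall n, 0 <= a n <= b n) -> ex_series b ->
  ex_series a /\ Series a <= Series b.
Proof. intros. split; [apply (ex_series_le_nonneg a b) | apply Series_le]; auto. Qed.

Lemma summable_ex_series a : summable a <-> ex_series a.
Proof. split; intros [l Hl]; exists l; apply is_series_Reals; auto. Qed.

Lemma series_Series a : summable a -> series a = Series a.
Proof.
  intros Hs. unfold series.
  pose proof (epsilon_spec (inhabits 0) (fun l => infinite_sum a l) Hs) as H.
  symmetry. apply is_series_unique, is_series_Reals, H.
Qed.

Lemma sum_f_R0_indicator j v N :
  sum_f_R0 (fun i => if Nat.eqb i j then v else 0) N = if Nat.leb j N then v else 0.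
Proof.
  induction N as [|N IH]; [destruct j; reflexivity |].
  change (sum_f_R0 ?f (S N)) with (sum_f_R0 f N + f (S N)). rewrite IH. cbv beta.
  destruct (Nat.leb_spec j N), (Nat.eqb_spec (S N) j), (Nat.leb_spec j (S N)); try lia; ring.
Qed.

Lemma Series_finite a N : (forall n, (N < n)%nat -> a n = 0) ->
  ex_series a /\ Series a = sum_f_R0 a N.
Proof.
  intros H.
  assert (Hi : infinite_sum a (sum_f_R0 a N)).
  { intros eps He. exists N. intros n Hn. unfold Rdist.
    replace (sum_f_R0 a n) with (sum_f_R0 a N); [rewrite Rminus_eq_0, Rabs_R0; auto |].
    induction Hn; auto. simpl. rewrite <- IHHn, H by lia. ring. }
  apply is_series_Reals in Hi.
  split; [exists (sum_f_R0 a N); auto | apply is_series_unique; auto].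
Qed.

Lemma Series_indicator a k0 v : (forall k, a k = if Nat.eqb k k0 then v else 0) ->
  ex_series a /\ Series a = v.
Proof.
  intros H. destruct (Series_finite a k0) as [H1 H2].
  { intros n Hn. rewrite H. destruct (Nat.eqb_spec n k0); auto; lia. }
  split; auto. rewrite H2, (sum_eq _ _ _ (fun i _ => H i)), sum_f_R0_indicator.
  rewrite Nat.leb_refl; auto.
Qed.

Lemma Series_ge0 a : (forall n, 0 <= a n) -> ex_series a -> 0 <= Series a.
Proof.
  intros H Ha.
  destruct (Series_indicator (fun _ => 0) 0 0) as [_ H0]; [intros; destruct (Nat.eqb _ _); auto |].
  rewrite <- H0. apply Series_le; auto. intros; split; [lra | auto].
Qed.

Lemma Series_ge_term a n : (forall n, 0 <= a n) -> ex_series a -> a n <= Series a.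
Proof.
  intros H [l Hl]. rewrite (is_series_unique a l Hl). apply is_series_Reals in Hl.
  apply Rle_trans with (sum_f_R0 a n).
  - destruct n; simpl; [lra |]. pose proof (cond_pos_sum a n H). lra.
  - apply (growing_ineq (fun n => sum_f_R0 a n)); auto.
    intros m. simpl. pose proof (H (S m)). lra.
Qed.

(* [N] terms, unlike [sum_f_R0 f N], which has [N + 1]. *)
Fixpoint rsum (f : nat -> R) (N : nat) : R :=
  match N with O => 0 | S N' => rsum f N' + f N' end.

Lemma rsum_le f g N : (forall a, (a < N)%nat -> f a <= g a) -> rsum f N <= rsum g N.
Proof.
  intros H; induction N; simpl; [lra |].
  pose proof (H N ltac:(lia)). pose proof (IHN (fun a Ha => H a ltac:(lia))). lra.
Qed.

Lemma rsum_const c N : rsum (fun _ => c) N = INR N * c.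
Proof. induction N; simpl rsum; [simpl; ring |]. rewrite IHN, S_INR; ring. Qed.

Lemma rsum_ge0 f N : (forall a, (a < N)%nat -> 0 <= f a) -> 0 <= rsum f N.
Proof. intros H. pose proof (rsum_le (fun _ => 0) f N H). rewrite rsum_const in H0. lra. Qed.

Lemma rsum_scal_l c f N : rsum (fun a => c * f a) N = c * rsum f N.
Proof. induction N; simpl; [ring |]. rewrite IHN; ring. Qed.

Lemma rsum_minus f g N : rsum (fun a => f a - g a) N = rsum f N - rsum g N.
Proof. induction N; simpl; [ring |]. rewrite IHN; ring. Qed.

Lemma rsum_zero f N : (forall a, (a < N)%nat -> f a = 0) -> rsum f N = 0.
Proof.
  intros H; induction N; simpl; auto.
  rewrite IHN by (intros; apply H; lia). rewrite H by lia. ring.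
Qed.

Lemma Series_rsum (f : nat -> nat -> R) N : (forall a, (a < N)%nat -> ex_series (f a)) ->
  ex_series (fun n => rsum (fun a => f a n) N) /\
  Series (fun n => rsum (fun a => f a n) N) = rsum (fun a => Series (f a)) N.
Proof.
  intros H. induction N as [|N IH]; simpl.
  - apply (Series_indicator _ 0). intros; destruct (Nat.eqb _ _); auto.
  - destruct IH as [IH1 IH2]; [intros; apply H; lia |].
    split; [apply ex_series_Rplus; auto |]. rewrite Series_plus, IH2; auto.
Qed.

Lemma rpow_rsum_le p c N : 0 < p -> (forall a, 0 <= c a) ->
  rpow (rsum c N) p <= rpow 2 p ^ N * rsum (fun a => rpow (c a) p) N.
Proof.
  intros Hp Hc. induction N as [|N IH]; simpl; [rewrite rpow_0_l; lra |].
  assert (H0 : 0 <= rsum c N) by (apply rsum_ge0; auto).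
  pose proof (one_le_rpow2 p ltac:(lra)) as H2.
  assert (H3 : 1 <= rpow 2 p ^ N) by (apply pow_R1_Rle; auto).
  assert (H4 : 0 <= rsum (fun a => rpow (c a) p) N) by (apply rsum_ge0; intros; apply rpow_ge0).
  pose proof (rpow_ge0 (c N) p).
  eapply Rle_trans; [apply rpow_plus_le; auto |].
  rewrite Rmult_assoc. apply Rmult_le_compat_l; nra.
Qed.

(** * Complex numbers *)

Ltac cx_eq := unfold Cadd, Csub, Cmul, RtoC; apply injective_projections; simpl; ring.

Lemma Cmod_add_le z w : Cmod (Cadd z w) <= Cmod z + Cmod w.
Proof. exact (Cmod_triangle z w). Qed.

Lemma Cmod_mul z w : Cmod (Cmul z w) = Cmod z * Cmod w.
Proof. exact (Coquelicot.Complex.Cmod_mult z w). Qed.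

Lemma Cmod_ge0 z : 0 <= Cmod z.
Proof. exact (Cmod_ge_0 z). Qed.

Lemma Cmod_RtoC a : Cmod (RtoC a) = Rabs a.
Proof. exact (Cmod_R a). Qed.

Lemma Cmod_fst z : Rabs (fst z) <= Cmod z.
Proof. exact (re_le_Cmod z). Qed.

Lemma Cmod_eq0 z : Cmod z = 0 -> z = (0, 0).
Proof. exact (Cmod_eq_0 z). Qed.

Lemma Cmod_0 : Cmod (0, 0) = 0.
Proof. change (0, 0) with (RtoC 0). rewrite Cmod_RtoC. apply Rabs_R0. Qed.

Lemma Cmod_1 : Cmod (1, 0) = 1.
Proof. change (1, 0) with (RtoC 1). rewrite Cmod_RtoC. apply Rabs_R1. Qed.

Lemma Cmod_sub_le z w : Cmod (Csub z w) <= Cmod z + Cmod w.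
Proof.
  replace (Csub z w) with (Cadd z (Cmul (RtoC (-1)) w)) by cx_eq.
  eapply Rle_trans; [apply Cmod_add_le |].
  rewrite Cmod_mul, Cmod_RtoC, Rabs_left by lra. lra.
Qed.

Fixpoint csum (F : nat -> Cx) (N : nat) : Cx :=
  match N with O => (0, 0) | S N' => Cadd (csum F N') (F N') end.

Lemma csum_zero F N : (forall a, (a < N)%nat -> F a = (0, 0)) -> csum F N = (0, 0).
Proof.
  intros H; induction N; simpl; auto.
  rewrite IHN by (intros; apply H; lia). rewrite H by lia. cx_eq.
Qed.

Lemma csum_plus F G N : csum (fun a => Cadd (F a) (G a)) N = Cadd (csum F N) (csum G N).
Proof. induction N; simpl; [|rewrite IHN]; cx_eq. Qed.

Lemma Cmod_csum_le F N : Cmod (csum F N) <= rsum (fun a => Cmod (F a)) N.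
Proof.
  induction N; simpl; [rewrite Cmod_0; lra |].
  eapply Rle_trans; [apply Cmod_add_le | lra].
Qed.

(* Compare [csum F N] with [N z] term by term. *)
Lemma Cmod_csum_ge F z e N : (forall t, (t < N)%nat -> Cmod (Csub (F t) z) <= e) ->
  INR N * (Cmod z - e) <= Cmod (csum F N).
Proof.
  intros H.
  assert (HD : Cmod (Csub (csum F N) (Cmul (RtoC (INR N)) z)) <= INR N * e).
  { induction N as [|N IH].
    - simpl. replace (Csub (0, 0) (Cmul (RtoC 0) z)) with ((0, 0) : Cx) by cx_eq.
      rewrite Cmod_0. lra.
    - replace (Csub (csum F (S N)) (Cmul (RtoC (INR (S N))) z)) with
        (Cadd (Csub (csum F N) (Cmul (RtoC (INR N)) z)) (Csub (F N) z))
        by (simpl csum; rewrite S_INR; cx_eq).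
      eapply Rle_trans; [apply Cmod_add_le |]. rewrite S_INR.
      pose proof (IH (fun t Ht => H t ltac:(lia))). pose proof (H N ltac:(lia)). lra. }
  pose proof (Cmod_sub_le (csum F N) (Csub (csum F N) (Cmul (RtoC (INR N)) z))) as Hs.
  replace (Csub (csum F N) (Csub (csum F N) (Cmul (RtoC (INR N)) z)))
    with (Cmul (RtoC (INR N)) z) in Hs by cx_eq.
  rewrite Cmod_mul, Cmod_RtoC, Rabs_pos_eq in Hs by apply pos_INR. lra.
Qed.

Lemma rpow_Cmod_csum_disjoint p (g : nat -> bool) (V : nat -> Cx) N :
  (forall a b, (a < N)%nat -> (b < N)%nat -> g a = true -> g b = true -> a = b) ->
  rpow (Cmod (csum (fun a => if g a then V a else (0, 0)) N)) p =
  rsum (fun a => if g a then rpow (Cmod (V a)) p else 0) N.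
Proof.
  intros H. induction N as [|N IH]; simpl; [rewrite Cmod_0; apply rpow_0_l |].
  destruct (g N) eqn:Eg.
  - assert (Hothers : forall a, (a < N)%nat -> g a = false).
    { intros a Ha. destruct (g a) eqn:Ea; auto. specialize (H a N ltac:(lia) ltac:(lia) Ea Eg). lia. }
    rewrite csum_zero, rsum_zero by (intros a Ha; rewrite Hothers; auto).
    replace (Cadd (0, 0) (V N)) with (V N) by cx_eq. ring.
  - replace (Cadd (csum (fun a => if g a then V a else (0, 0)) N) (0, 0))
      with (csum (fun a => if g a then V a else (0, 0)) N) by cx_eq.
    rewrite IH by (intros; apply H; auto; lia). ring.
Qed.

(* Split [csum V N] into the single selected term and the rest, which [e] controls. *)
Lemma almost_disjoint_pointwise p (g : nat -> bool) (V : nat -> Cx) (e : nat -> R) d N :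
  0 < p -> 0 < d -> (forall a, 0 <= e a) ->
  (forall a, (a < N)%nat -> g a = false -> Cmod (V a) <= e a / d) ->
  (forall a b, (a < N)%nat -> (b < N)%nat -> g a = true -> g b = true -> a = b) ->
  rpow (Cmod (csum V N)) p <=
    rpow 2 p * (rsum (fun a => if g a then rpow (Cmod (V a)) p else 0) N +
                rpow (/ d) p * rpow 2 p ^ N * rsum (fun a => rpow (e a) p) N) /\
  rsum (fun a => if g a then rpow (Cmod (V a)) p else 0) N <=
    rpow 2 p * (rpow (Cmod (csum V N)) p +
                rpow (/ d) p * rpow 2 p ^ N * rsum (fun a => rpow (e a) p) N).
Proof.
  intros Hp Hd He Hfar Hdisj.
  set (sel := csum (fun a => if g a then V a else (0, 0)) N).
  set (rest := csum (fun a => if g a then (0, 0) else V a) N).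
  set (rest_bd := rsum (fun a => if g a then 0 else Cmod (V a)) N).
  assert (Esplit : csum V N = Cadd sel rest).
  { unfold sel, rest. rewrite <- csum_plus. f_equal. apply functional_extensionality; intros a.
    destruct (g a); cx_eq. }
  assert (Hrest : Cmod rest <= rest_bd).
  { eapply Rle_trans; [apply Cmod_csum_le |]. apply rsum_le. intros a _.
    destruct (g a); [rewrite Cmod_0 |]; lra. }
  assert (Hrest_bd0 : 0 <= rest_bd) by (eapply Rle_trans; [apply Cmod_ge0 | apply Hrest]).
  assert (Hrest_bd : rest_bd <= / d * rsum e N).
  { rewrite <- rsum_scal_l. apply rsum_le. intros a Ha. rewrite Rmult_comm.
    destruct (g a) eqn:E; [apply Rmult_le_pos; auto; left; apply Rinv_0_lt_compat; auto |].
    apply Hfar; auto. }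
  assert (Hrest_bd_p : rpow rest_bd p <= rpow (/ d) p * rpow 2 p ^ N * rsum (fun a => rpow (e a) p) N).
  { eapply Rle_trans; [apply rpow_le_compat; [lra | split; [auto | apply Hrest_bd]] |].
    rewrite rpow_mult_distr by (try apply rsum_ge0; auto; left; apply Rinv_0_lt_compat; auto).
    rewrite Rmult_assoc. apply Rmult_le_compat_l; [apply rpow_ge0 | apply rpow_rsum_le; auto]. }
  rewrite <- (rpow_Cmod_csum_disjoint p g V N Hdisj). fold sel.
  assert (H1 : Cmod (csum V N) <= Cmod sel + rest_bd).
  { rewrite Esplit. eapply Rle_trans; [apply Cmod_add_le | lra]. }
  assert (H2 : Cmod sel <= Cmod (csum V N) + rest_bd).
  { replace sel with (Csub (csum V N) rest) by (rewrite Esplit; cx_eq).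
    eapply Rle_trans; [apply Cmod_sub_le | lra]. }
  pose proof (one_le_rpow2 p ltac:(lra)).
  split; (eapply Rle_trans; [apply rpow_le_compat; [lra | split; [apply Cmod_ge0 | eassumption]] |]);
    (eapply Rle_trans; [apply rpow_plus_le; auto; apply Cmod_ge0 |]);
    apply Rmult_le_compat_l; lra.
Qed.

(** * The spaces [l^p] and [Y] *)

Definition lp_powsum (p : R) (x : nat -> Cx) : R := Series (fun n => rpow (Cmod (x n)) p).
Definition Y_powsum (p : R) (y : nat -> nat -> Cx) : R :=
  Series (fun k => rpow (block_norm k (y k)) p).

Lemma lp_norm_ge0 p x : 0 <= lp_norm p x.
Proof. apply rpow_ge0. Qed.

Lemma lp_powsum_ge0 p x : in_lp p x -> 0 <= lp_powsum p x.
Proof. intros H. apply Series_ge0; [intros; apply rpow_ge0 | apply summable_ex_series, H]. Qed.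

Lemma lp_powsum_eq p x : 0 < p -> in_lp p x -> lp_powsum p x = rpow (lp_norm p x) p.
Proof.
  intros Hp H. unfold lp_norm. rewrite series_Series by exact H.
  rewrite rpow_inv_rpow; auto. apply lp_powsum_ge0; auto.
Qed.

Lemma lp_powsum_bounds p x c M : 0 < p -> in_lp p x -> 0 <= c ->
  c <= lp_norm p x <= M -> rpow c p <= lp_powsum p x <= rpow M p.
Proof.
  intros Hp H Hc Hx. rewrite lp_powsum_eq by auto.
  split; apply rpow_le_compat; lra.
Qed.

Lemma Y_norm_powsum p y : in_Y p y -> Y_norm p y = rpow (Y_powsum p y) (1 / p).
Proof. intros [_ H]. unfold Y_norm, Y_powsum. rewrite series_Series; auto. Qed.

Lemma Cmod_le_lp_norm p x n : 0 < p -> in_lp p x -> Cmod (x n) <= lp_norm p x.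
Proof.
  intros Hp H. unfold lp_norm. rewrite series_Series by exact H.
  rewrite <- (rpow_rpow_inv (Cmod (x n)) p) by (auto; apply Cmod_ge0).
  apply rpow_le_compat; [apply Rlt_le, Rdiv_lt_0_compat; lra |].
  split; [apply rpow_ge0 |].
  apply (Series_ge_term (fun n => rpow (Cmod (x n)) p)); [intros; apply rpow_ge0 |].
  apply summable_ex_series, H.
Qed.

Lemma in_lp_sub p x y : 0 < p -> in_lp p x -> in_lp p y -> in_lp p (fun n => Csub (x n) (y n)).
Proof.
  intros Hp Hx Hy. apply summable_ex_series.
  apply (ex_series_le_nonneg _ (fun n => rpow 2 p * (rpow (Cmod (x n)) p + rpow (Cmod (y n)) p))).
  - intros n. split; [apply rpow_ge0 |]. eapply Rle_trans.
    + apply rpow_le_compat; [lra |]. split; [apply Cmod_ge0 | apply Cmod_sub_le].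
    + apply rpow_plus_le; auto; apply Cmod_ge0.
  - apply ex_series_Rscal, ex_series_Rplus; apply summable_ex_series; auto.
Qed.

Lemma in_lp_Dop p B w x : 0 < p -> (forall n, Cmod (w n) <= B) -> in_lp p x -> in_lp p (Dop w x).
Proof.
  intros Hp HB Hx. apply summable_ex_series.
  apply (ex_series_le_nonneg _ (fun n => rpow B p * rpow (Cmod (x n)) p)).
  - intros n. split; [apply rpow_ge0 |]. unfold Dop. rewrite Cmod_mul.
    pose proof (Cmod_ge0 (w n)). pose proof (Cmod_ge0 (x n)).
    rewrite <- rpow_mult_distr by (try apply Cmod_ge0; specialize (HB n); lra).
    apply rpow_le_compat; [lra |]. split; [nra |]. apply Rmult_le_compat_r; auto.
  - apply ex_series_Rscal, summable_ex_series, Hx.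
Qed.

Lemma block_norm_le k u v : (forall i, (i <= k)%nat -> Cmod (u i) <= Cmod (v i)) ->
  block_norm k u <= block_norm k v.
Proof.
  intros H. unfold block_norm. apply sqrt_le_1_alt, sum_Rle.
  intros i Hi. pose proof (H i Hi). pose proof (Cmod_ge0 (u i)). simpl. nra.
Qed.

Lemma block_norm_zero k u : (forall i, u i = (0, 0)) -> block_norm k u = 0.
Proof.
  intros H. unfold block_norm. rewrite (sum_eq _ (fun _ => 0)).
  - rewrite sum_cte, Rmult_0_l. apply sqrt_0.
  - intros i _. rewrite H, Cmod_0. ring.
Qed.

Definition Y_triangular (y : nat -> nat -> Cx) : Prop :=
  forall k i : nat, (k < i)%nat -> y k i = (0, 0).

Lemma in_Y_finite_blocks p y K : Y_triangular y ->
  (forall k i, (K < k)%nat -> y k i = (0, 0)) -> in_Y p y.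
Proof.
  intros Htri Hfin. split; auto. apply summable_ex_series.
  apply (Series_finite _ K). intros k Hk.
  rewrite block_norm_zero by (intros; apply Hfin; auto). apply rpow_0_l.
Qed.

Lemma Y_single_block p y k0 : 0 < p -> Y_triangular y ->
  (forall k i, k <> k0 -> y k i = (0, 0)) ->
  in_Y p y /\ Y_norm p y = block_norm k0 (y k0).
Proof.
  intros Hp Htri Hk0.
  assert (Hy : in_Y p y) by (apply (in_Y_finite_blocks p y k0); auto; intros; apply Hk0; lia).
  split; auto. rewrite Y_norm_powsum by auto. unfold Y_powsum.
  assert (Hind : forall k, rpow (block_norm k (y k)) p =
                          if Nat.eqb k k0 then rpow (block_norm k0 (y k0)) p else 0).
  { intros k. destruct (Nat.eqb_spec k k0) as [-> | Hne]; auto.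
    rewrite block_norm_zero by (intros; apply Hk0; auto). apply rpow_0_l. }
  rewrite (proj2 (Series_indicator _ k0 _ Hind)).
  apply rpow_rpow_inv; auto. apply sqrt_pos.
Qed.

Definition Y_zero : nat -> nat -> Cx := fun _ _ => (0, 0).

Definition Y_unit (k0 i0 : nat) : nat -> nat -> Cx :=
  fun k i => if Nat.eqb k k0 then (if Nat.eqb i i0 then (1, 0) else (0, 0)) else (0, 0).

Lemma block_norm_Y_unit k0 i0 : (i0 <= k0)%nat -> block_norm k0 (Y_unit k0 i0 k0) = 1.
Proof.
  intros H. unfold block_norm, Y_unit. rewrite Nat.eqb_refl.
  rewrite (sum_eq _ (fun i => if Nat.eqb i i0 then 1 else 0)).
  - rewrite sum_f_R0_indicator. replace (Nat.leb i0 k0) with true by (symmetry; apply Nat.leb_le; auto).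
    apply sqrt_1.
  - intros i _. destruct (Nat.eqb i i0); [rewrite Cmod_1 | rewrite Cmod_0]; ring.
Qed.

Lemma Y_unit_norm p k0 i0 : 0 < p -> (i0 <= k0)%nat ->
  in_Y p (Y_unit k0 i0) /\ Y_norm p (Y_unit k0 i0) = 1.
Proof.
  intros Hp Hi. rewrite <- (block_norm_Y_unit k0 i0 Hi).
  apply Y_single_block; auto.
  - intros k i Hki. unfold Y_unit.
    destruct (Nat.eqb_spec k k0), (Nat.eqb_spec i i0); auto; lia.
  - intros k i Hk. unfold Y_unit. destruct (Nat.eqb_spec k k0); tauto.
Qed.

Lemma Top_Y_lin a y b z : Top (Y_lin a y b z) = Y_lin a (Top y) b (Top z).
Proof. do 2 (apply functional_extensionality; intros). unfold Top, Y_lin. cx_eq. Qed.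

Lemma Top_Y_unit k0 i0 :
  Top (Y_unit k0 i0) = Y_lin (RtoC (INR (S i0) / INR (S k0))) (Y_unit k0 i0) (0, 0) (Y_unit k0 i0).
Proof.
  do 2 (apply functional_extensionality; intros). unfold Top, Y_lin, Y_unit.
  destruct (Nat.eqb_spec x k0), (Nat.eqb_spec x0 i0); subst; cx_eq.
Qed.

(* The diagonal entries [(i+1)/(k+1)] of [T] lie in [0, 1] for [i <= k], and
   [y k i = 0] for [i > k]. *)
Lemma Cmod_Top_le y k i : Y_triangular y -> Cmod (Top y k i) <= Cmod (y k i).
Proof.
  intros H. unfold Top. rewrite Cmod_mul, Cmod_RtoC.
  destruct (Nat.lt_ge_cases k i) as [Hl | Hl]; [rewrite H, Cmod_0 by auto; lra |].
  pose proof (Cmod_ge0 (y k i)).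
  assert (0 < INR (S k)) by (apply lt_0_INR; lia).
  assert (0 <= INR (S i) / INR (S k) <= 1).
  { split; [apply Rcomplements.Rdiv_le_0_compat; [apply pos_INR | auto] |].
    apply Rcomplements.Rle_div_l; auto. rewrite Rmult_1_l. apply le_INR; lia. }
  rewrite Rabs_pos_eq by lra. nra.
Qed.

Lemma Top_in_Y p y : 0 < p -> in_Y p y ->
  in_Y p (Top y) /\ Y_norm p (Top y) <= Y_norm p y.
Proof.
  intros Hp [Htri Hs].
  assert (Hle : forall k, 0 <= rpow (block_norm k (Top y k)) p <= rpow (block_norm k (y k)) p).
  { intros k. split; [apply rpow_ge0 |]. apply rpow_le_compat; [lra |].
    split; [apply sqrt_pos |]. apply block_norm_le. intros; apply Cmod_Top_le; auto. }
  assert (HTy : in_Y p (Top y)).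
  { split.
    - intros k i Hki. unfold Top. rewrite Htri by auto. cx_eq.
    - apply summable_ex_series. apply (ex_series_le_nonneg _ _ Hle). apply summable_ex_series; auto. }
  split; auto. rewrite !Y_norm_powsum by (auto; split; auto).
  apply rpow_le_compat; [apply Rlt_le, Rdiv_lt_0_compat; lra |].
  split; [apply Series_ge0; [intros; apply rpow_ge0 | apply summable_ex_series, HTy] |].
  apply Series_le; auto. apply summable_ex_series; auto.
Qed.

Fixpoint Y_comb (c : Cx) (kb ib : nat -> nat) (N : nat) : nat -> nat -> Cx :=
  match N with
  | O => Y_zero
  | S N' => Y_lin (1, 0) (Y_comb c kb ib N') c (Y_unit (kb N') (ib N'))
  end.

Lemma Y_comb_entry c kb ib N k i : (forall t, (t < N)%nat -> kb t <> k \/ ib t <> i) ->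
  Y_comb c kb ib N k i = (0, 0).
Proof.
  induction N as [|N IH]; intros H; [reflexivity |]. simpl. unfold Y_lin.
  rewrite IH by (intros; apply H; lia). unfold Y_unit.
  destruct (Nat.eqb_spec k (kb N)), (Nat.eqb_spec i (ib N));
    try (destruct (H N); [lia | congruence | congruence]); cx_eq.
Qed.

Lemma in_Y_Y_comb p c kb ib N : (forall t, (t < N)%nat -> (ib t <= kb t)%nat) ->
  in_Y p (Y_comb c kb ib N).
Proof.
  intros Hib.
  assert (HK : exists K, forall t, (t < N)%nat -> (kb t <= K)%nat).
  { clear Hib. induction N as [|N [K HK]]; [exists 0%nat; lia |].
    exists (Nat.max K (kb N)). intros t Ht.
    destruct (Nat.eq_dec t N) as [-> | Hne]; [lia | specialize (HK t ltac:(lia)); lia]. }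
  destruct HK as [K HK]. apply (in_Y_finite_blocks p _ K).
  - intros k i Hki. apply Y_comb_entry. intros t Ht.
    destruct (Nat.eq_dec (kb t) k); [right; specialize (Hib t Ht); lia | left; auto].
  - intros k i Hk. apply Y_comb_entry. intros t Ht. left. specialize (HK t Ht). lia.
Qed.

Lemma strictly_increasing_lt (f : nat -> nat) : (forall t, (f t < f (S t))%nat) ->
  forall a b, (a < b)%nat -> (f a < f b)%nat.
Proof. intros H a b Hab. induction Hab; [apply H | specialize (H m); lia]. Qed.

Lemma Y_powsum_Y_comb_blocks p kb ib N : 0 < p ->
  (forall t, (kb t < kb (S t))%nat) -> (forall t, (ib t <= kb t)%nat) ->
  Y_powsum p (Y_comb (1, 0) kb ib N) = INR N.
Proof.
  intros Hp Hkb Hib. induction N as [|N IH].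
  - unfold Y_powsum. simpl.
    apply (Series_indicator _ 0 0). intros k. rewrite block_norm_zero, rpow_0_l by reflexivity.
    destruct (Nat.eqb _ _); auto.
  - assert (Hold : forall i, Y_comb (1, 0) kb ib N (kb N) i = (0, 0)).
    { intros i. apply Y_comb_entry. intros t Ht. left.
      pose proof (strictly_increasing_lt kb Hkb t N Ht). lia. }
    assert (Hblock : forall k, rpow (block_norm k (Y_comb (1, 0) kb ib (S N) k)) p =
        rpow (block_norm k (Y_comb (1, 0) kb ib N k)) p + (if Nat.eqb k (kb N) then 1 else 0)).
    { intros k. destruct (Nat.eqb_spec k (kb N)) as [-> | Hne].
      - rewrite (block_norm_zero _ _ Hold), rpow_0_l.
        replace (Y_comb (1, 0) kb ib (S N) (kb N)) with (Y_unit (kb N) (ib N) (kb N)).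
        + rewrite block_norm_Y_unit, rpow_1_l by auto. ring.
        + apply functional_extensionality; intros i. simpl. unfold Y_lin. rewrite Hold. cx_eq.
      - replace (Y_comb (1, 0) kb ib (S N) k) with (Y_comb (1, 0) kb ib N k); [ring |].
        apply functional_extensionality; intros i. simpl. unfold Y_lin, Y_unit.
        destruct (Nat.eqb_spec k (kb N)); [lia | cx_eq]. }
    destruct (Series_indicator (fun k => if Nat.eqb k (kb N) then 1 else 0) (kb N) 1
                (fun k => eq_refl)) as [Hex1 HS1].
    assert (Hex : ex_series (fun k => rpow (block_norm k (Y_comb (1, 0) kb ib N k)) p))
      by (apply summable_ex_series, in_Y_Y_comb; auto).
    unfold Y_powsum in *. rewrite (Series_ext _ _ Hblock), Series_plus, IH, HS1, S_INR; auto.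
Qed.

Lemma block_norm_Y_comb_block c R m N : (1 <= m)%nat -> (N * m <= S R)%nat ->
  block_norm R (Y_comb c (fun _ => R) (fun a => a * m)%nat N R) = sqrt (INR N * Cmod c ^ 2).
Proof.
  intros Hm HN. unfold block_norm. f_equal. revert HN. induction N as [|N IH]; intros HN.
  - simpl. rewrite (sum_eq _ (fun _ => 0)), sum_cte; [ring |].
    intros; unfold Y_zero; rewrite Cmod_0; ring.
  - rewrite (sum_eq _ (fun i => Cmod (Y_comb c (fun _ => R) (fun a => a * m)%nat N R i) ^ 2 +
          (if Nat.eqb i (N * m) then Cmod c ^ 2 else 0))).
    + rewrite sum_plus, IH, sum_f_R0_indicator by nia.
      destruct (Nat.leb_spec (N * m) R); [rewrite S_INR; ring | nia].
    + intros i _. simpl. unfold Y_lin, Y_unit. rewrite Nat.eqb_refl.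
      destruct (Nat.eqb_spec i (N * m)) as [-> | Hne].
      * rewrite Y_comb_entry by (intros; right; nia).
        replace (Cadd (Cmul (1, 0) (0, 0)) (Cmul c (1, 0))) with c by cx_eq.
        rewrite Cmod_0. ring.
      * replace (Cadd (Cmul (1, 0) (Y_comb c (fun _ => R) (fun a => a * m)%nat N R i)) (Cmul c (0, 0)))
          with (Y_comb c (fun _ => R) (fun a => a * m)%nat N R i) by cx_eq. ring.
Qed.

Lemma Y_norm_Y_comb_block p c R m N : 0 < p -> (1 <= m)%nat -> (N * m <= S R)%nat ->
  in_Y p (Y_comb c (fun _ => R) (fun a => a * m)%nat N) /\
  Y_norm p (Y_comb c (fun _ => R) (fun a => a * m)%nat N) = sqrt (INR N * Cmod c ^ 2).
Proof.
  intros Hp Hm HN. rewrite <- (block_norm_Y_comb_block c R m N) by auto.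
  apply Y_single_block; auto.
  - refine (proj1 (in_Y_Y_comb p _ _ _ _ _)). intros t Ht. assert (t * m + m <= N * m)%nat by nia. lia.
  - intros k i Hk. apply Y_comb_entry. intros; left; auto.
Qed.

(** * Linear maps on [Y] *)

Definition Y_linear (p : R) (F : (nat -> nat -> Cx) -> nat -> Cx) : Prop :=
  forall a b y z, in_Y p y -> in_Y p z -> forall n,
    F (Y_lin a y b z) n = Cadd (Cmul a (F y n)) (Cmul b (F z n)).

Lemma Y_linear_zero p F n : Y_linear p F -> F Y_zero n = (0, 0).
Proof.
  intros HF.
  assert (HZ : in_Y p Y_zero) by (apply (in_Y_finite_blocks p _ 0); unfold Y_triangular; intros; reflexivity).
  replace Y_zero with (Y_lin (0, 0) Y_zero (0, 0) Y_zero)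
    by (do 2 (apply functional_extensionality; intros); unfold Y_lin, Y_zero; cx_eq).
  rewrite (HF _ _ _ _ HZ HZ). cx_eq.
Qed.

Lemma Y_linear_comb p F c kb ib N n : 0 < p -> Y_linear p F ->
  (forall t, (t < N)%nat -> (ib t <= kb t)%nat) ->
  F (Y_comb c kb ib N) n = Cmul c (csum (fun t => F (Y_unit (kb t) (ib t)) n) N).
Proof.
  intros Hp HF Hib. red in HF. induction N as [|N IH]; simpl.
  - rewrite (Y_linear_zero p) by auto. cx_eq.
  - rewrite HF.
    + rewrite IH by (intros; apply Hib; lia). cx_eq.
    + apply in_Y_Y_comb. intros; apply Hib; lia.
    + apply Y_unit_norm; auto.
Qed.

Definition Kop (w : nat -> Cx) (L : (nat -> nat -> Cx) -> nat -> Cx) :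
  (nat -> nat -> Cx) -> nat -> Cx :=
  fun y n => Csub (Dop w (L y) n) (L (Top y) n).

Lemma Y_linear_Kop p w L : 0 < p -> Y_linear p L -> Y_linear p (Kop w L).
Proof.
  intros Hp HL a b y z Hy Hz n. red in HL. unfold Kop, Dop. rewrite Top_Y_lin, !HL by (auto; apply Top_in_Y; auto).
  cx_eq.
Qed.

Lemma Kop_Y_unit p w L k0 i0 n : 0 < p -> Y_linear p L -> (i0 <= k0)%nat ->
  Kop w L (Y_unit k0 i0) n =
  Cmul (Csub (w n) (RtoC (INR (S i0) / INR (S k0)))) (L (Y_unit k0 i0) n).
Proof.
  intros Hp HL Hi. red in HL. unfold Kop, Dop. rewrite Top_Y_unit, HL by (apply Y_unit_norm; auto). cx_eq.
Qed.

(** * Almost disjointly supported sums *)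

Lemma lp_powsum_selected p x y D (sel : nat -> bool) : in_lp p x -> in_lp p y -> 0 <= D ->
  (forall n, sel n = false -> rpow (Cmod (x n)) p <= D * rpow (Cmod (y n)) p) ->
  ex_series (fun n => if sel n then rpow (Cmod (x n)) p else 0) /\
  lp_powsum p x - D * lp_powsum p y <= Series (fun n => if sel n then rpow (Cmod (x n)) p else 0).
Proof.
  intros Hx Hy HD Hsel. apply summable_ex_series in Hx, Hy.
  destruct (Series_le_ex (fun n => if sel n then rpow (Cmod (x n)) p else 0)
                         (fun n => rpow (Cmod (x n)) p)) as [Hex _]; auto.
  { intros n. destruct (sel n); split; try apply rpow_ge0; lra. }
  destruct (Series_le_ex (fun n => if sel n then 0 else rpow (Cmod (x n)) p)
                         (fun n => D * rpow (Cmod (y n)) p)) as [Hex' Hle];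
    [| apply ex_series_Rscal; auto |].
  { intros n. destruct (sel n) eqn:E; split; try apply Hsel; auto; try apply rpow_ge0; try lra.
    apply Rmult_le_pos; [auto | apply rpow_ge0]. }
  split; auto. rewrite Series_scal_l in Hle. unfold lp_powsum.
  replace (Series (fun n => rpow (Cmod (x n)) p)) with
    (Series (fun n => if sel n then rpow (Cmod (x n)) p else 0) +
     Series (fun n => if sel n then 0 else rpow (Cmod (x n)) p)); [lra |].
  rewrite <- Series_plus by auto. apply Series_ext. intros n. destruct (sel n); ring.
Qed.

Lemma Series_selected_bounds p (v e : nat -> nat -> Cx) (g : nat -> nat -> bool) d k :
  0 < p -> 0 < d ->
  (forall a, (a < k)%nat -> in_lp p (v a)) -> (forall a, (a < k)%nat -> in_lp p (e a)) ->
  (forall n a, (a < k)%nat -> g n a = false -> Cmod (v a n) <= Cmod (e a n) / d) ->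
  ex_series (fun n => rsum (fun a => if g n a then rpow (Cmod (v a n)) p else 0) k) /\
  rsum (fun a => lp_powsum p (v a)) k - rpow (/ d) p * rsum (fun a => lp_powsum p (e a)) k <=
    Series (fun n => rsum (fun a => if g n a then rpow (Cmod (v a n)) p else 0) k) <=
    rsum (fun a => lp_powsum p (v a)) k.
Proof.
  intros Hp Hd Hv He Hfar.
  assert (Hsel : forall a, (a < k)%nat ->
    ex_series (fun n => if g n a then rpow (Cmod (v a n)) p else 0) /\
    lp_powsum p (v a) - rpow (/ d) p * lp_powsum p (e a) <=
      Series (fun n => if g n a then rpow (Cmod (v a n)) p else 0)).
  { intros a Ha. apply lp_powsum_selected; auto; [apply rpow_ge0 |].
    intros n Hn. rewrite <- rpow_mult_distr by (try apply Cmod_ge0; left; apply Rinv_0_lt_compat; auto).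
    apply rpow_le_compat; [lra | split; [apply Cmod_ge0 |]].
    rewrite Rmult_comm. apply Hfar; auto. }
  destruct (Series_rsum (fun a n => if g n a then rpow (Cmod (v a n)) p else 0) k
              (fun a Ha => proj1 (Hsel a Ha))) as [HexA HSA].
  destruct (Series_rsum (fun a n => rpow (Cmod (v a n)) p) k
              (fun a Ha => proj1 (summable_ex_series _) (Hv a Ha))) as [HexV HSV].
  split; [exact HexA | split].
  - rewrite HSA, <- rsum_scal_l, <- rsum_minus. apply rsum_le. intros; apply Hsel; auto.
  - unfold lp_powsum. rewrite <- HSV. apply Series_le; auto.
    intros n. split; [apply rsum_ge0; intros; destruct (g n _); [apply rpow_ge0 | lra] |].
    apply rsum_le. intros a _. destruct (g n a); [lra | apply rpow_ge0].
Qed.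

Lemma almost_disjoint_series p (v e : nat -> nat -> Cx) (g : nat -> nat -> bool) d k :
  0 < p -> 0 < d ->
  (forall a, (a < k)%nat -> in_lp p (v a)) -> (forall a, (a < k)%nat -> in_lp p (e a)) ->
  (forall n a, (a < k)%nat -> g n a = false -> Cmod (v a n) <= Cmod (e a n) / d) ->
  (forall n a b, (a < k)%nat -> (b < k)%nat -> g n a = true -> g n b = true -> a = b) ->
  let S := Series (fun n => rpow (Cmod (csum (fun a => v a n) k)) p) in
  let V := rsum (fun a => lp_powsum p (v a)) k in
  let E := rsum (fun a => lp_powsum p (e a)) k in
  let C := rpow (/ d) p * rpow 2 p ^ k in
  S <= rpow 2 p * (V + C * E) /\ V - rpow (/ d) p * E <= rpow 2 p * (S + C * E).
Proof.
  intros Hp Hd Hv He Hfar Hdisj S V E C.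
  set (U := fun n => rpow (Cmod (csum (fun a => v a n) k)) p).
  set (A := fun n => rsum (fun a => if g n a then rpow (Cmod (v a n)) p else 0) k).
  set (En := fun n => rsum (fun a => rpow (Cmod (e a n)) p) k).
  assert (HC : 0 <= C) by (apply Rmult_le_pos; [apply rpow_ge0 | apply pow_le, rpow_ge0]).
  assert (HP2 : 1 <= rpow 2 p) by (apply one_le_rpow2; lra).
  assert (Hpt : forall n, U n <= rpow 2 p * (A n + C * En n) /\ A n <= rpow 2 p * (U n + C * En n))
    by (intros n; exact (almost_disjoint_pointwise p (g n) (fun a => v a n) (fun a => Cmod (e a n)) d k
                           Hp Hd (fun a => Cmod_ge0 _) (Hfar n) (Hdisj n))).
  destruct (Series_selected_bounds p v e g d k) as [HexA [HVA HAV]]; auto.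
  fold A V E in HexA, HVA, HAV.
  destruct (Series_rsum (fun a n => rpow (Cmod (e a n)) p) k
              (fun a Ha => proj1 (summable_ex_series _) (He a Ha))) as [HexE HSE].
  fold En in HexE, HSE. change (fun n => En n) with En in HexE, HSE.
  assert (HSR : forall f, ex_series f ->
    Series (fun n => rpow 2 p * (f n + C * En n)) = rpow 2 p * (Series f + C * E)).
  { intros f Hf. rewrite Series_scal_l, Series_plus, Series_scal_l, HSE;
      auto using ex_series_Rscal. }
  assert (HexR : forall f, ex_series f -> ex_series (fun n => rpow 2 p * (f n + C * En n)))
    by (intros; apply ex_series_Rscal, ex_series_Rplus, ex_series_Rscal; auto).
  assert (HexU : ex_series U)
    by (apply (ex_series_le_nonneg _ _ (fun n => conj (rpow_ge0 _ _) (proj1 (Hpt n)))); auto).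
  split.
  - apply Rle_trans with (rpow 2 p * (Series A + C * E)); [| nra].
    rewrite <- HSR by auto. apply Series_le; auto. intros n; split; [apply rpow_ge0 | apply Hpt].
  - apply Rle_trans with (Series A); auto. change S with (Series U).
    rewrite <- (HSR U) by auto. apply Series_le; auto.
    intros n; split; [apply rsum_ge0; intros; destruct (g n _); [apply rpow_ge0 | lra] | apply Hpt].
Qed.

(** * One block of [T] *)

Lemma grid_points_separated k m a b : (1 <= k)%nat -> (1 <= m)%nat -> a <> b ->
  / INR k <= Rabs (INR (S (a * m)) / INR (k * m) - INR (S (b * m)) / INR (k * m)).
Proof.
  intros Hk Hm Hab.
  assert (Hk' : 0 < INR k) by (apply lt_0_INR; lia).
  assert (Hm' : 0 < INR m) by (apply lt_0_INR; lia).
  replace (INR (S (a * m)) / INR (k * m) - INR (S (b * m)) / INR (k * m))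
    with ((INR a - INR b) / INR k) by (rewrite !S_INR, !mult_INR; field; lra).
  unfold Rdiv. rewrite Rabs_mult, (Rabs_pos_eq (/ INR k)) by (left; apply Rinv_0_lt_compat; auto).
  assert (1 <= Rabs (INR a - INR b)).
  { destruct (Nat.lt_gt_cases a b) as [Hlt _]. destruct (Hlt Hab) as [Hl | Hl];
      apply le_INR in Hl; rewrite S_INR in Hl;
      [rewrite Rabs_left1 by lra | rewrite Rabs_pos_eq by lra]; lra. }
  pose proof (Rinv_0_lt_compat _ Hk'). nra.
Qed.

Definition near_grid (x : R) (k m a : nat) : bool :=
  if Rlt_dec (Rabs (x - INR (S (a * m)) / INR (k * m))) (/ (2 * INR k)) then true else false.

Lemma near_grid_unique x k m a b : (1 <= k)%nat -> (1 <= m)%nat ->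
  near_grid x k m a = true -> near_grid x k m b = true -> a = b.
Proof.
  intros Hk Hm Ha Hb. unfold near_grid in Ha, Hb.
  destruct (Rlt_dec _ _) as [Ra | _] in Ha; [| discriminate].
  destruct (Rlt_dec _ _) as [Rb | _] in Hb; [| discriminate].
  destruct (Nat.eq_dec a b) as [| Hab]; auto. exfalso.
  pose proof (grid_points_separated k m a b Hk Hm Hab) as Hsep.
  assert (Hk' : 0 < INR k) by (apply lt_0_INR; lia).
  replace (/ (2 * INR k)) with (/ INR k / 2) in Ra, Rb by (field; lra).
  pose proof (Rabs_triang (INR (S (a * m)) / INR (k * m) - x) (x - INR (S (b * m)) / INR (k * m))) as T.
  rewrite Rabs_minus_sym in T.
  replace (_ + _) with (INR (S (a * m)) / INR (k * m) - INR (S (b * m)) / INR (k * m)) in T by ring.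
  lra.
Qed.

Lemma block_estimate_arith P s k cp Mp D C eta S V E :
  1 <= P -> 0 <= s -> 0 <= D -> 0 <= C ->
  S <= P * (V + C * E) -> V - D * E <= P * (S + C * E) ->
  k * cp <= V <= k * Mp -> 0 <= E <= k * eta -> cp <= s * S <= Mp ->
  cp <= s * k * (P * (Mp + C * eta)) /\ s * k * (/ P * (cp - D * eta) - C * eta) <= Mp.
Proof.
  intros HP Hs HD HC Hup Hlow HV HE HS.
  assert (HDE : D * E <= D * (k * eta)) by (apply Rmult_le_compat_l; lra).
  assert (HCE : C * E <= C * (k * eta)) by (apply Rmult_le_compat_l; lra).
  split.
  - assert (S <= P * (k * Mp + C * (k * eta))) by (eapply Rle_trans; [exact Hup | apply Rmult_le_compat_l; lra]).
    assert (s * S <= s * (P * (k * Mp + C * (k * eta)))) by (apply Rmult_le_compat_l; auto).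
    nra.
  - assert (HSl : k * (/ P * (cp - D * eta) - C * eta) <= S).
    { apply Rmult_le_reg_l with P; [lra |].
      replace (P * (k * (/ P * (cp - D * eta) - C * eta)))
        with (k * cp - D * (k * eta) - P * (C * (k * eta))) by (field; lra).
      nra. }
    assert (s * (k * (/ P * (cp - D * eta) - C * eta)) <= s * S) by (apply Rmult_le_compat_l; auto).
    nra.
Qed.

(* [k^(-1/2)] times the sum of the unit vectors at positions [am], [a < k], of
   block [km] (0-based index [km - 1]). *)
Definition block_vector (k m : nat) : nat -> nat -> Cx :=
  Y_comb (RtoC (/ sqrt (INR k))) (fun _ => (k * m - 1)%nat) (fun a => (a * m)%nat) k.

Lemma block_vector_unit p k m : 0 < p -> (1 <= k)%nat -> (1 <= m)%nat ->
  in_Y p (block_vector k m) /\ Y_norm p (block_vector k m) = 1.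
Proof.
  intros Hp Hk Hm. assert (Hk' : 0 < INR k) by (apply lt_0_INR; lia).
  destruct (Y_norm_Y_comb_block p (RtoC (/ sqrt (INR k))) (k * m - 1) m k) as [HY Hn]; auto; [nia |].
  split; auto. unfold block_vector. rewrite Hn, Cmod_RtoC, pow2_abs, pow_inv, pow2_sqrt by lra.
  rewrite Rinv_r, sqrt_1 by lra. reflexivity.
Qed.

(** * The operator [K = DL - LT] *)

Section Operator.

Variables (p B M : R) (w : nat -> Cx) (L : (nat -> nat -> Cx) -> nat -> Cx).
Hypothesis hp : 1 < p.
Hypothesis hw : forall n, Cmod (w n) <= B.
Hypothesis hL_lp : forall y, in_Y p y -> in_lp p (L y).
Hypothesis hL_lin : Y_linear p L.
Hypothesis hL_bdd : forall y, in_Y p y -> lp_norm p (L y) <= M * Y_norm p y.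

Let hp0 : 0 < p.
Proof. lra. Qed.

Lemma M_ge0 : 0 <= M.
Proof.
  destruct (Y_unit_norm p 0 0) as [HY Hn]; auto.
  pose proof (hL_bdd _ HY) as H. rewrite Hn in H.
  pose proof (lp_norm_ge0 p (L (Y_unit 0 0))). lra.
Qed.

Lemma in_lp_Kop y : in_Y p y -> in_lp p (Kop w L y).
Proof.
  intros Hy. apply in_lp_sub; auto.
  - apply (in_lp_Dop p B); auto.
  - apply hL_lp, Top_in_Y; auto.
Qed.

Lemma Cmod_Kop_le y n : in_Y p y -> Cmod (Kop w L y n) <= (B + 1) * M * Y_norm p y.
Proof.
  intros Hy. destruct (Top_in_Y p y) as [HTy HTn]; auto.
  pose proof M_ge0. pose proof (hw n). pose proof (Cmod_ge0 (w n)).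
  pose proof (Cmod_le_lp_norm p (L y) n hp0 (hL_lp y Hy)).
  pose proof (Cmod_le_lp_norm p (L (Top y)) n hp0 (hL_lp _ HTy)).
  pose proof (hL_bdd y Hy). pose proof (hL_bdd _ HTy).
  pose proof (Cmod_ge0 (L y n)). pose proof (rpow_ge0 (Y_norm p y)).
  assert (M * Y_norm p (Top y) <= M * Y_norm p y) by (apply Rmult_le_compat_l; auto).
  unfold Kop, Dop. eapply Rle_trans; [apply Cmod_sub_le |]. rewrite Cmod_mul.
  unfold Y_norm in *. nra.
Qed.

(* Unit vectors from distinct blocks [kb t] are a weakly null sequence: summing
   [N] of them gives a vector of norm [N^(1/p)], so a fixed coordinate of their
   images under [Kop w L] cannot stay near a nonzero [z]. *)
Lemma Kop_units_coord_not_near kb ib n0 z :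
  (forall t, (kb t < kb (S t))%nat) -> (forall t, (ib t <= kb t)%nat) -> 0 < Cmod z ->
  ~ (forall t, Cmod (Csub (Kop w L (Y_unit (kb t) (ib t)) n0) z) <= Cmod z / 2).
Proof.
  intros Hkb Hib Hz Hnear.
  destruct (rpow_sublinear (1 / p) ((B + 1) * M) (Cmod z / 2)) as [N [HN1 HN2]].
  { split; [apply Rdiv_lt_0_compat | apply Rmult_lt_reg_r with p; field_simplify]; lra. }
  { lra. }
  pose proof (Cmod_csum_ge _ z (Cmod z / 2) N (fun t _ => Hnear t)) as Hlow.
  assert (HY : in_Y p (Y_comb (1, 0) kb ib N)) by (apply in_Y_Y_comb; auto).
  pose proof (Cmod_Kop_le _ n0 HY) as Hup.
  rewrite (Y_linear_comb p (Kop w L)), Cmod_mul, Cmod_1, Rmult_1_l in Hup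
    by auto using Y_linear_Kop.
  rewrite Y_norm_powsum, Y_powsum_Y_comb_blocks in Hup by auto.
  lra.
Qed.

Lemma L_unit_off_grid k m a n : (1 <= k)%nat -> (1 <= m)%nat -> (a < k)%nat ->
  near_grid (fst (w n)) k m a = false ->
  Cmod (L (Y_unit (k * m - 1) (a * m)) n) <=
    Cmod (Kop w L (Y_unit (k * m - 1) (a * m)) n) / / (2 * INR k).
Proof.
  intros Hk Hm Ha Hfar. unfold near_grid in Hfar.
  destruct (Rlt_dec _ _) as [_ | Hn]; [discriminate |].
  assert (Hk' : 0 < INR k) by (apply lt_0_INR; lia).
  assert (Hd : 0 < / (2 * INR k)) by (apply Rinv_0_lt_compat; lra).
  replace (k * m)%nat with (S (k * m - 1)) in Hn by nia.
  assert (Hfst : Rabs (fst (w n) - INR (S (a * m)) / INR (S (k * m - 1))) <=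
                 Cmod (Csub (w n) (RtoC (INR (S (a * m)) / INR (S (k * m - 1))))))
    by exact (Cmod_fst (Csub (w n) (RtoC (INR (S (a * m)) / INR (S (k * m - 1)))))).
  rewrite (Kop_Y_unit p), Cmod_mul by (auto; assert (a * m + m <= k * m)%nat by nia; lia).
  apply Rcomplements.Rle_div_r; auto. pose proof (Cmod_ge0 (L (Y_unit (k * m - 1) (a * m)) n)). nra.
Qed.

Lemma lp_powsum_L_block_vector k m : (1 <= k)%nat -> (1 <= m)%nat ->
  lp_powsum p (L (block_vector k m)) =
  rpow (/ sqrt (INR k)) p *
    Series (fun n => rpow (Cmod (csum (fun a => L (Y_unit (k * m - 1) (a * m)) n) k)) p).
Proof.
  intros Hk Hm. assert (Hs : 0 < / sqrt (INR k)).
  { apply Rinv_0_lt_compat, sqrt_lt_R0, lt_0_INR. lia. }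
  unfold lp_powsum. rewrite <- Series_scal_l. apply Series_ext. intros n.
  unfold block_vector. rewrite (Y_linear_comb p L) by (auto; intros; nia).
  rewrite Cmod_mul, Cmod_RtoC, Rabs_pos_eq, rpow_mult_distr by (auto using Cmod_ge0; lra).
  reflexivity.
Qed.

Variable c : R.
Hypothesis hc : 0 < c.
Hypothesis hL_below : forall y, in_Y p y -> Y_norm p y = 1 -> c <= lp_norm p (L y).

Lemma block_estimate k m eta : (1 <= k)%nat -> (1 <= m)%nat -> 0 <= eta ->
  (forall a, (a < k)%nat -> lp_powsum p (Kop w L (Y_unit (k * m - 1) (a * m))) <= eta) ->
  rpow c p <= rpow (INR k) (1 - p / 2) *
                (rpow 2 p * (rpow M p + rpow (2 * INR k) p * rpow 2 p ^ k * eta)) /\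
  rpow (INR k) (1 - p / 2) *
    (/ rpow 2 p * (rpow c p - rpow (2 * INR k) p * eta) - rpow (2 * INR k) p * rpow 2 p ^ k * eta)
    <= rpow M p.
Proof.
  intros Hk Hm Heta Hsmall.
  assert (Hk' : 0 < INR k) by (apply lt_0_INR; lia).
  assert (Hunit : forall a, (a < k)%nat ->
      in_Y p (Y_unit (k * m - 1) (a * m)) /\ Y_norm p (Y_unit (k * m - 1) (a * m)) = 1)
    by (intros a Ha; apply Y_unit_norm; [lra | assert (a * m + m <= k * m)%nat by nia; lia]).
  destruct (almost_disjoint_series p (fun a => L (Y_unit (k * m - 1) (a * m)))
              (fun a => Kop w L (Y_unit (k * m - 1) (a * m)))
              (fun n a => near_grid (fst (w n)) k m a) (/ (2 * INR k)) k) as [Hup Hlow];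
    auto using L_unit_off_grid.
  - apply Rinv_0_lt_compat; lra.
  - intros a Ha. apply hL_lp, Hunit; auto.
  - intros a Ha. apply in_lp_Kop, Hunit; auto.
  - intros n a b _ _. apply near_grid_unique; auto.
  - rewrite Rinv_inv in Hup, Hlow.
    assert (Hva : forall a, (a < k)%nat ->
      rpow c p <= lp_powsum p (L (Y_unit (k * m - 1) (a * m))) <= rpow M p).
    { intros a Ha. destruct (Hunit a Ha) as [HY Hn].
      apply lp_powsum_bounds; auto; [lra |].
      split; [apply hL_below | rewrite <- (Rmult_1_r M), <- Hn; apply hL_bdd]; auto. }
    destruct (block_vector_unit p k m hp0 Hk Hm) as [HxY Hxn].
    destruct (lp_powsum_bounds p (L (block_vector k m)) c M) as [Hx1 Hx2]; auto; [lra | |].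
    { split; [apply hL_below | rewrite <- (Rmult_1_r M), <- Hxn; apply hL_bdd]; auto. }
    rewrite lp_powsum_L_block_vector in Hx1, Hx2 by auto.
    rewrite <- (rpow_inv_sqrt_mul (INR k) p Hk').
    apply block_estimate_arith with (1 := one_le_rpow2 p ltac:(lra)) (5 := Hup) (6 := Hlow);
      auto using rpow_ge0.
    + apply Rmult_le_pos; [apply rpow_ge0 | apply pow_le, rpow_ge0].
    + rewrite <- !rsum_const. split; apply rsum_le; intros a Ha; destruct (Hva a Ha); cbv beta; lra.
    + split; [apply rsum_ge0; intros a Ha; apply lp_powsum_ge0, in_lp_Kop, Hunit; auto |].
      rewrite <- rsum_const. apply rsum_le; auto.
Qed.

Hypothesis hK : compact_Y_lp p (Kop w L).

Lemma Kop_units_vanish kb ib :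
  (forall t, (kb t < kb (S t))%nat) -> (forall t, (ib t <= kb t)%nat) ->
  forall eta, 0 < eta -> exists t, lp_powsum p (Kop w L (Y_unit (kb t) (ib t))) < eta.
Proof.
  intros Hkb Hib eta Heta.
  destruct (hK (fun t => Y_unit (kb t) (ib t))) as [phi [z [Hphi [Hz Hcv]]]].
  { intros m. destruct (Y_unit_norm p (kb m) (ib m)) as [H1 H2]; auto. split; [auto | lra]. }
  set (Ke := fun t => Kop w L (Y_unit (kb (phi t)) (ib (phi t)))).
  assert (Hin : forall t, in_lp p (fun n => Csub (Ke t n) (z n))).
  { intros t. apply in_lp_sub, Hz; auto. apply in_lp_Kop, Y_unit_norm; auto. }
  assert (Hz0 : forall n, z n = (0, 0)).
  { intros n0. destruct (classic (z n0 = (0, 0))) as [| Hne]; auto. exfalso.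
    assert (Hpos : 0 < Cmod (z n0)).
    { destruct (Cmod_ge0 (z n0)) as [| H0]; auto. symmetry in H0. now apply Cmod_eq0 in H0. }
    destruct (Hcv (Cmod (z n0) / 2)) as [m1 Hm1]; [lra |].
    apply (Kop_units_coord_not_near (fun t => kb (phi (m1 + t)%nat))
             (fun t => ib (phi (m1 + t)%nat)) n0 (z n0)); auto.
    - intros t. apply strictly_increasing_lt; auto. apply strictly_increasing_lt; auto. lia.
    - intros t. specialize (Hm1 (m1 + t)%nat ltac:(lia)). unfold R_dist in Hm1.
      rewrite Rminus_0_r, Rabs_pos_eq in Hm1 by apply lp_norm_ge0.
      apply Rlt_le. eapply Rle_lt_trans; [apply (Cmod_le_lp_norm p _ n0 hp0 (Hin (m1 + t)%nat)) |].
      exact Hm1. }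
  destruct (Hcv (rpow eta (1 / p))) as [m1 Hm1]; [apply rpow_gt0; auto |].
  exists (phi m1). specialize (Hm1 m1 (le_n _)). unfold R_dist in Hm1.
  rewrite Rminus_0_r, Rabs_pos_eq in Hm1 by apply lp_norm_ge0.
  replace (fun n => Csub (Kop w L (Y_unit (kb (phi m1)) (ib (phi m1))) n) (z n))
    with (Kop w L (Y_unit (kb (phi m1)) (ib (phi m1)))) in Hm1
    by (apply functional_extensionality; intros n; rewrite Hz0; cx_eq).
  rewrite lp_powsum_eq by (auto; apply in_lp_Kop, Y_unit_norm; auto).
  rewrite <- (rpow_inv_rpow eta p) by lra. apply rpow_lt_compat; [lra |].
  split; [apply rpow_ge0 | auto].
Qed.

Lemma block_with_small_Kop k eta : (1 <= k)%nat -> 0 < eta -> exists m, (1 <= m)%nat /\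
  forall a, (a < k)%nat -> lp_powsum p (Kop w L (Y_unit (k * m - 1) (a * m))) <= eta.
Proof.
  intros Hk Heta. apply NNPP. intros Hno.
  assert (Hbad : forall t, exists a, (a < k)%nat /\
      eta < lp_powsum p (Kop w L (Y_unit (k * S t - 1) (a * S t)))).
  { intros t. apply NNPP. intros Hn. apply Hno. exists (S t). split; [lia |].
    intros a Ha. apply Rnot_lt_le. intros Hlt. apply Hn. exists a. auto. }
  destruct (choice _ Hbad) as [af Haf].
  destruct (Kop_units_vanish (fun t => (k * S t - 1)%nat) (fun t => (af t * S t)%nat))
    with (eta := eta) as [t Ht]; auto.
  - intros t. nia.
  - intros t. pose proof (proj1 (Haf t)). nia.
  - pose proof (proj2 (Haf t)). lra.
Qed.

Lemma k_pow_bounds : exists lo hi, 0 < lo /\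
  forall k, (1 <= k)%nat -> lo <= rpow (INR k) (1 - p / 2) <= hi.
Proof.
  set (P := rpow 2 p). set (cp := rpow c p). set (Mp := rpow M p).
  assert (HP : 1 <= P) by (apply one_le_rpow2; lra).
  assert (Hcp : 0 < cp) by (apply rpow_gt0; auto).
  assert (HMp : 0 <= Mp) by apply rpow_ge0.
  exists (cp / (P * (Mp + cp))), (2 * P * Mp / cp).
  split; [apply Rdiv_lt_0_compat; nra |]. intros k Hk.
  set (D := rpow (2 * INR k) p). set (C := D * P ^ k).
  assert (HD : 0 <= D) by apply rpow_ge0.
  assert (HDC : D <= C) by (unfold C; pose proof (pow_R1_Rle P k HP); nra).
  (* [eta] makes the error terms of [block_estimate] at most [c^p / (4 * 2^p)]. *)
  set (eta := cp / (4 * P * (C + 1))).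
  assert (Heta : 0 < eta) by (apply Rdiv_lt_0_compat; nra).
  assert (HCe : C * eta <= cp / (4 * P)).
  { unfold eta. apply Rmult_le_reg_r with (4 * P * (C + 1)); [nra |].
    field_simplify; nra. }
  destruct (block_with_small_Kop k eta Hk Heta) as [m [Hm Hsmall]].
  destruct (block_estimate k m eta Hk Hm (Rlt_le _ _ Heta) Hsmall) as [U1 U2].
  fold P cp Mp D C in U1, U2.
  set (sigma := rpow (INR k) (1 - p / 2)) in *.
  assert (Hsigma : 0 < sigma) by (apply rpow_gt0, lt_0_INR; lia).
  assert (HcP : cp / (4 * P) <= cp / 4)
    by (apply Rmult_le_compat_l; [lra | apply Rinv_le_contravar; lra]).
  split.
  - apply Rcomplements.Rle_div_l; [nra |].
    assert (P * (Mp + C * eta) <= P * (Mp + cp)).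
    { apply Rmult_le_compat_l; lra. }
    nra.
  - apply Rcomplements.Rle_div_r; [lra |].
    assert (Hbr : cp / (2 * P) <= / P * (cp - D * eta) - C * eta).
    { assert (D * eta <= C * eta) by (apply Rmult_le_compat_r; lra).
      replace (cp / (2 * P)) with (/ P * (cp - cp / 4) - cp / (4 * P)) by (field; lra).
      assert (/ P * (cp - cp / 4) <= / P * (cp - D * eta)).
      { apply Rmult_le_compat_l; [left; apply Rinv_0_lt_compat |]; lra. }
      lra. }
    assert (sigma * (cp / (2 * P)) <= Mp) by (eapply Rle_trans; [| apply U2]; apply Rmult_le_compat_l; lra).
    replace (sigma * cp) with (2 * P * (sigma * (cp / (2 * P)))) by (field; lra). nra.
Qed.

End Operator.

Theorem lemma5p21 (p : R) (hp1 : 1 < p) (hp2 : p <> 2)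
  (w : nat -> Cx) (hw : bounded_weights w) :
  ~ exists L : (nat -> nat -> Cx) -> (nat -> Cx),
      bounded_linear_Y_lp p L /\
      (exists c : R, 0 < c /\
         forall y, in_Y p y -> Y_norm p y = 1 -> c <= lp_norm p (L y)) /\
      compact_Y_lp p
        (fun y n => Csub (Dop w (L y) n) (L (Top y) n)).
Proof.
  intros [L [[HL_lp [HL_lin [M HL_bdd]]] [[c [Hc HL_below]] HK]]].
  destruct hw as [B HB].
  assert (Hexp : 1 - p / 2 = 0).
  { apply rpow_INR_bounded_exponent.
    exact (k_pow_bounds p B M w L hp1 HB HL_lp HL_lin HL_bdd c Hc HL_below HK). }
  lra.
Qed.
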